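(* Let $A$ be an abelian group of Type I or Type II, of order $n$, let $p\in\left[\frac{25(\log n)^2}{n},\,1-\frac{25(\log n)^2}{n}\right]$, and let $S$ be a random inverse-closed subset of $A$ chosen as in the model below. For a subset $S\subseteq A$, call a pair $(C,Z)$ of subgroups of $A$ good for $S$ if: (1) $C$ is cyclic, $Z$ is an elementary abelian $2$-group, and $A=C\times Z$; (2) $|C|\ge 4$; (3) there exist $S'\in\{C,\emptyset,\{0\},C\setminus\{0\}\}$ and $S''\subseteq Z$ with $S=S'\times S''$. Then the probability that there exists a pair $(C,Z)$ good for $S$ is $O\!\left(\exp\!\left(-\frac{25(\log n)^2(n-1)}{2n}\right)\right)$.
   Context: A finite abelian group $A$ is of Type I if $\gcd(|A|,6)=1$, and of Type II if $A\cong \mathbb{Z}_2^r\times N$ for some integer $r\ge 0$ and some abelian group $N$ of odd order which is not cyclic. Random model: given $A$ (written additively) and $0<p<1$, a random subset $S\subseteq A\setminus\{0\}$ is formed as follows: each element $g\in A$ of order exactly $2$ is put into $S$ independently with probability $p$, and for each pair $\{x,-x\}$ with $x\ne -x$, both $x$ and $-x$ are put into $S$ with probability $p$ (and neither otherwise), all these choices being independent. $\log$ denotes $\log_2$. *)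

From Stdlib Require Import Reals List.
From mathcomp Require Import all_boot all_fingroup.
From mathcomp Require Import abelian gproduct cyclic.

Set Implicit Arguments.
Unset Strict Implicit.
Unset Printing Implicit Defensive.

Local Open Scope R_scope.

(* The abelian group A is the whole carrier of a finGroupType gT (written
   multiplicatively: 0 of the paper is 1, -x is x^-1, S'×S'' is the set product). *)

Definition log2 (x : R) : R := ln x / ln 2.

Definition typeI (gT : finGroupType) : bool := coprime #|gT| 6.

Definition typeII (gT : finGroupType) : bool :=
  [exists E : {group gT}, exists N : {group gT},
     [&& (2.-abelem E)%g, odd #|N|, ~~ cyclic N & (E \x N == [set: gT])%g]].

(* Units of the random model: {x, x^-1} for x <> 1 (a singleton if #[x] = 2). *)
Definition model_units (gT : finGroupType) : {set {set gT}} :=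
  [set [set x; (x^-1)%g] | x in [set~ (1%g : gT)]].

Definition model_weight (gT : finGroupType) (p : R) (S : {set gT}) : R :=
  if (S^-1 == S)%g && ((1%g : gT) \notin S) then
    p ^ #|[set u in model_units gT | u \subset S]| *
    (1 - p) ^ #|[set u in model_units gT | ~~ (u \subset S)]|
  else 0.

Definition model_prob (gT : finGroupType) (p : R) (E : pred {set gT}) : R :=
  fold_right Rplus 0
    (map (fun S => if E S then model_weight p S else 0) (enum [set: {set gT}])).

Definition good_pair (gT : finGroupType) (S : {set gT}) (C Z : {group gT}) : bool :=
  [&& cyclic C, (2.-abelem Z)%g, (C \x Z == [set: gT])%g, (4 <= #|C|)%N &
      [exists S1 : {set gT}, exists S2 : {set gT},
         [&& (S1 \in [:: (C : {set gT}); set0; [set 1%g]; C :\ 1%g]),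
             S2 \subset Z & S == (S1 * S2)%g]]].

Definition has_good_pair (gT : finGroupType) (S : {set gT}) : bool :=
  [exists C : {group gT}, exists Z : {group gT}, good_pair S C Z].

(* If A = C x Z with C cyclic and Z an elementary abelian 2-group, every
   odd-order element of A is a square and squares lie in C, so the odd part of
   A lies in C.  For Type II this makes the non-cyclic odd factor N cyclic, so
   no good pair exists; for Type I it forces C = A and Z = 1, so a good pair
   leaves only S = {} or S = A \ {0}.  In the random model these have
   probability (1 - p)^m and p^m, where m >= (n - 1) / 2 is the number of units
   {x, -x}, and both are at most exp(-q m) <= exp(-q (n - 1) / 2) with
   q = 25 (log n)^2 / n, because q <= p <= 1 - q. *)
From Stdlib Require Import Reals List Lra.
From mathcomp Require Import all_boot all_fingroup.
From mathcomp Require Import abelian gproduct cyclic.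

Set Implicit Arguments.
Unset Strict Implicit.
Unset Printing Implicit Defensive.

Local Open Scope group_scope.

Section DirectProductWithElementary2Group.

Variable gT : finGroupType.
Implicit Types (C Z G H : {group gT}) (x y : gT).

Lemma expg_uphalf_order x : odd #[x] -> (x ^+ uphalf #[x]) ^+ 2 = x.
Proof.
by move=> ox; rewrite -expgM muln2 odd_uphalfK // expgSr expg_order mul1g.
Qed.

Lemma expg2_mem_dprod_abelem2 C Z G y :
  C \x Z = G -> 2.-abelem Z -> y \in G -> y ^+ 2 \in C.
Proof.
case/dprodP=> _ <- cCZ _ /(abelemP (isT : prime 2)) [_ Z2].
case/mulsgP=> c z Cc Zz ->.
have czC : commute c z by apply: commute_sym; exact: centP (subsetP cCZ z Zz) c Cc.
by rewrite expgMn // (Z2 z Zz) mulg1 groupX.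
Qed.

Lemma odd_sub_dprod_abelem2 C Z G H :
  C \x Z = G -> 2.-abelem Z -> H \subset G -> odd #|H| -> H \subset C.
Proof.
move=> dCZ aZ sHG oH; apply/subsetP=> x Hx.
have oddx : odd #[x] by exact: dvdn_odd (order_dvdG Hx) oH.
rewrite -(expg_uphalf_order oddx).
by apply: expg2_mem_dprod_abelem2 dCZ aZ _; rewrite groupX // (subsetP sHG).
Qed.

Lemma odd_dprod_abelem2 C Z G :
  C \x Z = G -> 2.-abelem Z -> odd #|G| -> Z :=: 1.
Proof.
move=> dCZ aZ oG; have sGC := odd_sub_dprod_abelem2 dCZ aZ (subxx G) oG.
case/dprodP: (dCZ) => _ eCZ _ tCZ.
apply/eqP; rewrite eqEsubset sub1G andbT -tCZ subsetI subxx andbT.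
by apply: subset_trans sGC; rewrite -eCZ mulG_subr.
Qed.

End DirectProductWithElementary2Group.

Lemma typeII_dprod_abelem2_not_cyclic (gT : finGroupType) (C Z : {group gT}) :
  typeII gT -> C \x Z = [set: gT] -> 2.-abelem Z -> ~~ cyclic C.
Proof.
case/existsP=> E /existsP [N /and4P [_ oN ncN _]] dCZ aZ.
apply: contra ncN => /cyclicS; apply.
exact: odd_sub_dprod_abelem2 dCZ aZ (subsetT N) oN.
Qed.

Lemma good_pair_typeI_typeII (gT : finGroupType) (S : {set gT}) (C Z : {group gT}) :
  typeI gT || typeII gT -> good_pair S C Z -> 1 \notin S ->
  S = set0 \/ S = [set~ 1].
Proof.
move=> tG /and5P [cC aZ /eqP dCZ _ /existsP [S1 /existsP [S2]]].
case/and3P=> S1_cases sS2Z /eqP ->.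
case/orP: tG => [tI | tII]; last by case/negP: (typeII_dprod_abelem2_not_cyclic tII dCZ aZ).
have oG : odd #|[set: gT]| by rewrite cardsT -coprimen2 (coprime_dvdr _ tI).
have Z1 := odd_dprod_abelem2 dCZ aZ oG.
have CT : (C : {set gT}) = setT by rewrite -(dprodg1 C) -Z1.
move: sS2Z; rewrite Z1 subset1 => /orP [/eqP -> | /eqP ->]; last by rewrite mulg0; left.
rewrite mulg1 => notS1; move: S1_cases notS1; rewrite !inE CT.
by case/or4P=> /eqP ->; rewrite ?inE ?eqxx ?setTD; auto.
Qed.

Section RandomModel.

Variable gT : finGroupType.
Implicit Types (S : {set gT}) (u : {set gT}).

Lemma model_unit_neq0 u : u \in model_units gT -> u != set0.
Proof. by case/imsetP=> x _ ->; apply/set0Pn; exists x; rewrite !inE eqxx. Qed.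

Lemma model_unit_subsetC1 u : u \in model_units gT -> u \subset [set~ 1].
Proof.
case/imsetP=> x; rewrite !inE => x1 ->.
by apply/subsetP=> y; rewrite !inE => /orP [] /eqP ->; rewrite ?invg_eq1.
Qed.

Lemma card_model_units : (#|gT|.-1 <= 2 * #|model_units gT|)%N.
Proof.
rewrite -(cardsC1 (1 : gT)).
have sC1cover : [set~ (1 : gT)] \subset cover (model_units gT).
  apply/subsetP=> x x1; apply/bigcupP; exists [set x; x^-1].
    by apply/imsetP; exists x.
  by rewrite !inE eqxx.
apply: leq_trans (subset_leq_card sC1cover) _.
apply: leq_trans (leq_card_cover _) _.
rewrite mulnC -sum_nat_const; apply: leq_sum => _ /imsetP [x _ ->].
by rewrite cards2; case: (_ != _).
Qed.

Local Open Scope R_scope.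

Variable p : R.
Hypothesis p01 : 0 <= p <= 1.

Let m := #|model_units gT|.

Lemma model_weight_ge0 S : 0 <= model_weight p S.
Proof.
by rewrite /model_weight; case: ifP => _; [apply: Rmult_le_pos; apply: pow_le |]; lra.
Qed.

Lemma model_weight_set0 : model_weight p (set0 : {set gT}) = (1 - p) ^ m.
Proof.
have inv0 : (set0 : {set gT})^-1 == set0 by apply/eqP/setP=> x; rewrite !inE.
rewrite /model_weight inv0 inE /=.
have -> : [set u in model_units gT | u \subset set0] = set0.
  by apply/setP=> u; rewrite !inE subset0; case: (boolP (u \in _)) => // /model_unit_neq0/negbTE ->.
have -> : [set u in model_units gT | ~~ (u \subset set0)] = model_units gT.
  by apply/setP=> u; rewrite !inE subset0; case: (boolP (u \in _)) => // /model_unit_neq0 ->.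
by rewrite cards0 /= Rmult_1_l.
Qed.

Lemma model_weight_setC1 : model_weight p [set~ (1%g : gT)] = p ^ m.
Proof.
have invC1 : [set~ (1%g : gT)]^-1 == [set~ 1%g] by apply/eqP/setP=> x; rewrite !inE invg_eq1.
rewrite /model_weight invC1 !inE eqxx /=.
have -> : [set u in model_units gT | u \subset [set~ 1%g]] = model_units gT.
  by apply/setP=> u; rewrite !inE; case: (boolP (u \in _)) => // /model_unit_subsetC1 ->.
have -> : [set u in model_units gT | ~~ (u \subset [set~ 1%g])] = set0.
  by apply/setP=> u; rewrite !inE; case: (boolP (u \in _)) => // /model_unit_subsetC1 ->.
by rewrite cards0 /= Rmult_1_r.
Qed.

Lemma fold_Rplus_map_le (T : Type) (f g : T -> R) (s : list T) :
  (forall x, f x <= g x) ->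
  fold_right Rplus 0 (map f s) <= fold_right Rplus 0 (map g s).
Proof. by move=> fg; elim: s => [|x s IHs] /=; [lra | have := fg x; lra]. Qed.

Lemma fold_Rplus_map_add (T : Type) (f g : T -> R) (s : list T) :
  fold_right Rplus 0 (map (fun x => f x + g x) s) =
  fold_right Rplus 0 (map f s) + fold_right Rplus 0 (map g s).
Proof. by elim: s => [|x s IHs] /=; [| rewrite IHs]; ring. Qed.

Lemma fold_Rplus_map_indicator (T : eqType) (a : T) (c : R) (s : seq T) :
  uniq s ->
  fold_right Rplus 0 (map (fun x => if x == a then c else 0) s) =
  if a \in s then c else 0.
Proof.
elim: s => [|x s IHs] //= /andP [xs us]; rewrite IHs // in_cons eq_sym.
by case: eqP => [-> | _] /=; rewrite ?(negbTE xs); ring.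
Qed.

Lemma model_prob_le_set0_setC1 (E : pred {set gT}) :
  (forall S, E S -> 1%g \notin S -> S = set0 \/ S = [set~ 1%g]) ->
  model_prob p E <= (1 - p) ^ m + p ^ m.
Proof.
move=> E_cases; rewrite /model_prob.
have q0 : 0 <= (1 - p) ^ m by apply: pow_le; lra.
have p0 : 0 <= p ^ m by apply: pow_le; lra.
apply: Rle_trans (fold_Rplus_map_le (g := fun S =>
  (if S == set0 then (1 - p) ^ m else 0) + (if S == [set~ 1%g] then p ^ m else 0)) _ _) _.
  move=> S; have w0 := model_weight_ge0 S.
  have [ES | _] := boolP (E S); last by do 2 case: ifP; lra.
  have [S1 | nS1] := boolP (1%g \in S).
    by rewrite /model_weight S1 andbF; do 2 case: ifP; lra.
  have [-> | ->] := E_cases S ES nS1.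
    by rewrite model_weight_set0 eqxx; case: ifP; lra.
  by rewrite model_weight_setC1 eqxx; case: ifP; lra.
by rewrite fold_Rplus_map_add !fold_Rplus_map_indicator ?enum_uniq // !mem_enum !inE; lra.
Qed.

End RandomModel.

Local Open Scope R_scope.

Lemma model_prob_has_good_pair_le (gT : finGroupType) (p : R) :
  typeI gT || typeII gT -> 0 <= p <= 1 ->
  model_prob p (@has_good_pair gT)
    <= (1 - p) ^ #|model_units gT| + p ^ #|model_units gT|.
Proof.
move=> tG p01; apply: model_prob_le_set0_setC1 => // S /existsP [C /existsP [Z good]].
exact: good_pair_typeI_typeII tG good.
Qed.

Lemma exp_le_compat x y : x <= y -> exp x <= exp y.
Proof. by case=> [/exp_increasing | ->]; lra. Qed.

Lemma pow_exp x k : exp x ^ k = exp (x * INR k).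
Proof.
elim: k => [|k IHk]; first by rewrite /= Rmult_0_r exp_0.
by rewrite S_INR -tech_pow_Rmult IHk -exp_plus; f_equal; ring.
Qed.

Lemma pow_one_sub_le_exp r k : r <= 1 -> (1 - r) ^ k <= exp (- (r * INR k)).
Proof.
move=> r1; apply: Rle_trans (_ : exp (- r) ^ k <= _); last by rewrite pow_exp; apply: Req_le; f_equal; ring.
by apply: pow_incr; have := exp_ineq1_le (- r); lra.
Qed.

Theorem mainTheorem4 :
  exists (K : R) (n0 : nat), 0 < K /\
  forall (gT : finGroupType) (p : R),
    abelian [set: gT] ->
    typeI gT || typeII gT ->
    (n0 <= #|gT|)%N ->
    let n := INR #|gT| in
    25 * (log2 n) ^ 2 / n <= p ->
    p <= 1 - 25 * (log2 n) ^ 2 / n ->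
    0 < p < 1 ->
    model_prob p (@has_good_pair gT)
      <= K * exp (- (25 * (log2 n) ^ 2 * (n - 1) / (2 * n))).
Proof.
exists 2, 0%N; split; first lra.
move=> gT p _ tG _ n qp pq p01.
set q := 25 * log2 n ^ 2 / n in qp pq; set m := #|model_units gT|.
have n_gt0 : (0 < #|gT|)%N by apply/card_gt0P; exists 1%g.
have n_ge1 : 1 <= n by apply: (le_INR 1); apply/leP.
have m_large : n - 1 <= 2 * INR m.
  have := le_INR _ _ (leP (card_model_units gT)).
  by rewrite mult_INR /n -{2}(prednK n_gt0) !S_INR INR_0 -/m; lra.
have decay r : q <= r -> 0 <= r <= 1 -> (1 - r) ^ m <= exp (- (q * (n - 1) / 2)).
  move=> qr r01; apply: Rle_trans (pow_one_sub_le_exp m (proj2 r01)) (exp_le_compat _).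
  nra.
have -> : 25 * log2 n ^ 2 * (n - 1) / (2 * n) = q * (n - 1) / 2 by rewrite /q; field; lra.
have := model_prob_has_good_pair_le tG (ltac:(lra) : 0 <= p <= 1); rewrite -/m.
have := decay p qp ltac:(lra); have := decay (1 - p) ltac:(lra) ltac:(lra).
by rewrite (_ : 1 - (1 - p) = p); [lra | ring].
Qed.
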